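(* The projectors $\hat P_g$, $g\in G$, onto the isotypes of $\hat U$ satisfy the Knill–Laflamme condition diagonally: $\Pi_{\rm pn}\hat P_g\hat P_{g'}\Pi_{\rm pn}=\frac1{2^{n-k}}\delta_{g,g'}\Pi_{\rm pn}$ for all $g,g'\in G$.
   Context: Let $n\ge1$, $0\le k<n$, $\mathcal{H}_{\rm kin}=(\mathbb{C}^2)^{\otimes n}$, $G=\mathbb{Z}_2^{\times(n-k)}$, and $U:G\to\mathcal{P}_n$, $g\mapsto U^g$, a faithful unitary representation into the $n$-qubit Pauli group with $-I\notin U(G)$ (stabilizer code); $\Pi_{\rm pn}=\frac1{|G|}\sum_gU^g$ is the projector onto the code space. $\hat G$ is the group of characters $\chi:G\to\{\pm1\}$. Let $\hat U:\hat G\to\mathrm{Aut}(\mathcal{H}_{\rm kin})$, $\chi\mapsto\hat U^\chi$, be a unitary representation dual to $U$, i.e. $U^g\hat U^\chi=\chi(g)\hat U^\chi U^g$ for all $g,\chi$, and for $g\in G$ let $\hat P_g=\frac1{2^{n-k}}\sum_{\chi\in\hat G}\chi(g)\hat U^\chi$ (the orthogonal projector onto the isotype of $\hat U$ labeled by $g$). *)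

From HB Require Import structures.
From mathcomp Require Import all_boot all_order all_algebra all_field.
From mathcomp Require Import spectral mxtens.
Set Implicit Arguments. Unset Strict Implicit. Unset Printing Implicit Defensive.
Import Order.TTheory GRing.Theory Num.Theory.
Local Open Scope ring_scope.

Definition pauli1 (a : 'I_4) : 'M[algC]_2 :=
  \matrix_(i < 2, j < 2)
    match nat_of_ord a with
    | 0%N => if i == j then 1 else 0
    | 1%N => if i == j then 0 else 1
    | 2%N => if i == j then 0 else (if nat_of_ord i == 0%N then - 'i else 'i)
    | _ => if i == j then (if nat_of_ord i == 0%N then 1 else -1) else 0
    end.

Fixpoint pauli_string (n : nat) (f : nat -> 'I_4) : 'M[algC]_(2 ^ n) :=
  match n return 'M[algC]_(2 ^ n) with
  | 0%N => 1%:M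
  | m.+1 => castmx (esym (expnS 2 m), esym (expnS 2 m))
              (pauli1 (f 0%N) *t pauli_string m (fun i => f i.+1))
  end.

Definition in_pauli_group (n : nat) (M : 'M[algC]_(2 ^ n)) : Prop :=
  exists (c : 'I_4) (f : nat -> 'I_4), M = ('i ^+ c) *: pauli_string n f.

Definition Zgrp (m : nat) := 'rV['F_2]_m.

(* Characters chi : G -> {+1,-1}.  A map G -> {+1,-1} is encoded as a boolean
   finite function (true <-> -1); [chival chi g] is its value in C. *)
Definition chival (m : nat) (chi : {ffun Zgrp m -> bool}) (g : Zgrp m) : algC :=
  (-1) ^+ chi g.

Definition is_character (m : nat) (chi : {ffun Zgrp m -> bool}) : bool :=
  [forall g, forall h, chival chi (g + h) == chival chi g * chival chi h].

Definition dual_group (m : nat) : {set {ffun Zgrp m -> bool}} :=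
  [set chi | is_character chi].

Definition chi_mul (m : nat) (chi1 chi2 : {ffun Zgrp m -> bool})
  : {ffun Zgrp m -> bool} := [ffun g => chi1 g (+) chi2 g].

Definition Pi_pn (N m : nat) (U : Zgrp m -> 'M[algC]_N) : 'M[algC]_N :=
  (#|{: Zgrp m}|%:R)^-1 *: \sum_(g : Zgrp m) U g.

Definition hatP (N m : nat) (hatU : {ffun Zgrp m -> bool} -> 'M[algC]_N)
  (g : Zgrp m) : 'M[algC]_N :=
  ((2 ^ m)%:R)^-1 *: \sum_(chi in dual_group m) chival chi g *: hatU chi.

From HB Require Import structures.
From mathcomp Require Import all_boot all_order all_algebra all_field.
From mathcomp Require Import spectral mxtens.
Import Order.TTheory GRing.Theory Num.Theory.
Local Open Scope ring_scope.
Set Implicit Arguments. Unset Strict Implicit.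

(* The two orthogonality
   relations (a nontrivial character sums to 0 over G; the characters at
   g <> 0 sum to 0 over the dual) give |\hat G| = |G| = 2^m and make the
   \hat P_g orthogonal idempotents: \hat P_g \hat P_g' = delta_{g,g'} \hat P_g'.
   The duality relation moves \hat U^chi past every U^g in Pi_pn, and U^g Pi_pn
   = Pi_pn, so Pi_pn \hat U^chi Pi_pn = |G|^-1 (sum_g chi(g)) \hat U^chi Pi_pn,
   which is Pi_pn for the trivial character and 0 otherwise; averaging over
   chi gives Pi_pn \hat P_g Pi_pn = 2^-m Pi_pn. *)

Lemma eq_oppr0 (R : numDomainType) (x : R) : x = - x -> x = 0.
Proof.
move=> x_opp; apply/eqP; have := mulrn_eq0 x 2; rewrite /= => <-.
by rewrite mulr2n {1}x_opp addNr.
Qed.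

Lemma unitarymx_idem (C : numClosedFieldType) n (M : 'M[C]_n) :
  M \is unitarymx -> M *m M = M -> M = 1%:M.
Proof.
move=> /unitarymxP M_unitary M_idem.
by rewrite -[LHS]mulmx1 -M_unitary mulmxA M_idem.
Qed.

Lemma F2_addr_neq0 (x y : 'F_2) : (x + y != 0) = (x != 0) (+) (y != 0).
Proof. by case: x => [[|[|x]] ?]; case: y => [[|[|y]] ?]. Qed.

Section Characters.

Variable m : nat.
Implicit Types (g h : Zgrp m) (c d : {ffun Zgrp m -> bool}).

Definition chi_triv : {ffun Zgrp m -> bool} := [ffun=> false].

Lemma card_Zgrp : #|{: Zgrp m}| = (2 ^ m)%N.
Proof. by rewrite card_mx card_Fp // mul1n. Qed.

Lemma Zgrp_oppr g : - g = g.
Proof. by apply/matrixP => i j; rewrite mxE (oppr_pchar2 (pchar_Fp _)). Qed.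

Lemma Zgrp_addr_eq0 g h : (g + h == 0) = (g == h).
Proof. by rewrite -{1}(Zgrp_oppr h) subr_eq0. Qed.

Lemma chival_mul c d g : chival (chi_mul c d) g = chival c g * chival d g.
Proof. by rewrite /chival ffunE signr_addb. Qed.

Lemma chival_triv g : chival chi_triv g = 1.
Proof. by rewrite /chival ffunE. Qed.

Lemma chival_add c : c \in dual_group m -> forall g h,
  chival c (g + h) = chival c g * chival c h.
Proof. by rewrite inE => /forallP c_char g h; apply/eqP/(forallP (c_char g)). Qed.

Lemma chival0 c : c \in dual_group m -> chival c 0 = 1.
Proof.
move=> c_dual; have := chival_add c_dual 0 0.
by rewrite addr0 /chival -signr_addb addbb => ->.
Qed.

Lemma chi_triv_dual : chi_triv \in dual_group m.
Proof.
by rewrite inE; apply/forallP => g; apply/forallP => h; rewrite !chival_triv mulr1.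
Qed.

Lemma chi_mulK c : involutive (chi_mul c).
Proof. by move=> d; apply/ffunP => g; rewrite !ffunE addKb. Qed.

Lemma chi_mulxx c : chi_mul c c = chi_triv.
Proof. by apply/ffunP => g; rewrite !ffunE addbb. Qed.

Lemma chi_mul_dual c d :
  c \in dual_group m -> d \in dual_group m -> chi_mul c d \in dual_group m.
Proof.
move=> c_dual d_dual; rewrite inE; apply/forallP => g; apply/forallP => h.
by rewrite !chival_mul !chival_add // mulrACA.
Qed.

Lemma chi_mul_dualr c d : c \in dual_group m ->
  (chi_mul c d \in dual_group m) = (d \in dual_group m).
Proof.
move=> c_dual; apply/idP/idP; last exact: chi_mul_dual.
by rewrite -{2}(chi_mulK c d); apply: chi_mul_dual.
Qed.

Lemma reindex_chi_mul (V : nmodType) c (F : {ffun Zgrp m -> bool} -> V) :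
  c \in dual_group m ->
  \sum_(d in dual_group m) F d = \sum_(d in dual_group m) F (chi_mul c d).
Proof.
move=> c_dual; rewrite (reindex_inj (inv_inj (chi_mulK c))) /=.
by apply: eq_bigl => d; rewrite chi_mul_dualr.
Qed.

Lemma separating_char g : g != 0 -> exists2 c, c \in dual_group m & c g.
Proof.
move=> g_neq0; have [i gi_neq0] : exists i, g 0 i != 0.
  apply/existsP; apply: contraR g_neq0 => /existsPn g0.
  by apply/eqP/matrixP => a i; rewrite mxE (ord1 a); apply/eqP/negPn/g0.
exists [ffun h : Zgrp m => h 0 i != 0]; last by rewrite ffunE.
rewrite inE; apply/forallP => h1; apply/forallP => h2.
by rewrite /chival !ffunE mxE F2_addr_neq0 signr_addb.
Qed.

Lemma sum_chival_Zgrp c : c \in dual_group m ->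
  \sum_g chival c g = if c == chi_triv then #|{: Zgrp m}|%:R else 0.
Proof.
move=> c_dual; case: eqP => [->|c_nontriv].
  by under eq_bigr do rewrite chival_triv; rewrite sumr_const.
have [g0 cg0] : exists g0, c g0.
  apply/existsP; apply: contraR (introN eqP c_nontriv) => /existsPn c0.
  by apply/eqP/ffunP => g; rewrite ffunE; apply/negbTE/c0.
apply: eq_oppr0; rewrite [LHS](reindex_inj (addIr g0)) /=.
under eq_bigr do rewrite chival_add //.
by rewrite -mulr_suml /chival cg0 mulrN1.
Qed.

Lemma sum_chival_dual g :
  \sum_(c in dual_group m) chival c g = if g == 0 then #|dual_group m|%:R else 0.
Proof.
case: eqP => [->|/eqP g_neq0].
  by rewrite -sumr_const; apply: eq_bigr => c; apply: chival0.
have [c0 c0_dual c0g] := separating_char g_neq0.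
apply: eq_oppr0; rewrite [LHS](reindex_chi_mul _ c0_dual) -sumrN.
by apply: eq_bigr => c _; rewrite chival_mul /chival c0g mulN1r.
Qed.

(* Double counting of \sum_g \sum_c chi(g): only g = 0, resp. the trivial chi, contributes. *)
Lemma card_dual_group : #|dual_group m| = (2 ^ m)%N.
Proof.
have : \sum_g \sum_(c in dual_group m) chival c g
       = \sum_(c in dual_group m) \sum_g chival c g by rewrite exchange_big.
rewrite (bigD1 0) //= [X in _ + X = _]big1 => [|g /negbTE g_neq0]; last first.
  by rewrite sum_chival_dual g_neq0.
rewrite [RHS](bigD1 chi_triv) ?chi_triv_dual //= [X in _ = _ + X]big1; last first.
  by move=> c /andP[c_dual /negbTE c_nontriv]; rewrite sum_chival_Zgrp // c_nontriv.
rewrite sum_chival_dual sum_chival_Zgrp ?chi_triv_dual // !eqxx !addr0 card_Zgrp.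
by move/eqP; rewrite eqr_nat => /eqP.
Qed.

Lemma sum_chival_mul g g' :
  \sum_(c in dual_group m) chival c g * chival c g' = (g == g')%:R * (2 ^ m)%:R.
Proof.
rewrite (eq_bigr (fun c => chival c (g + g'))) => [|c c_dual]; last first.
  by rewrite chival_add.
by rewrite sum_chival_dual Zgrp_addr_eq0 card_dual_group; case: eqP; rewrite ?mul1r ?mul0r.
Qed.

End Characters.

Section Projectors.

Variables (N m : nat) (U : Zgrp m -> 'M[algC]_N).
Variable hatU : {ffun Zgrp m -> bool} -> 'M[algC]_N.
Hypothesis U_hom : forall g h, U (g + h) = U g *m U h.
Hypothesis hatU_hom : forall c d, c \in dual_group m -> d \in dual_group m ->
  hatU (chi_mul c d) = hatU c *m hatU d.
Hypothesis dual : forall g c, c \in dual_group m ->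
  U g *m hatU c = chival c g *: (hatU c *m U g).

Lemma two_expn_neq0 : (2 ^ m)%:R != 0 :> algC.
Proof. by rewrite pnatr_eq0 expn_eq0. Qed.

Lemma hatP_mul g g' : hatP hatU g *m hatP hatU g' = (g == g')%:R *: hatP hatU g'.
Proof.
have expand c : c \in dual_group m ->
    (chival c g *: hatU c) *m (\sum_(d in dual_group m) chival d g' *: hatU d)
    = \sum_(d in dual_group m) (chival c g * chival c g' * chival d g') *: hatU d.
  move=> c_dual; rewrite mulmx_sumr (reindex_chi_mul _ c_dual).
  apply: eq_bigr => d d_dual; rewrite -scalemxAl -scalemxAr scalerA -hatU_hom ?chi_mul_dual //.
  by rewrite chi_mulK chival_mul mulrA.
rewrite /hatP -scalemxAl -scalemxAr scalerA mulmx_suml (eq_bigr _ expand).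
rewrite exchange_big /=; under eq_bigr do rewrite -scaler_suml -mulr_suml sum_chival_mul -scalerA.
rewrite -scaler_sumr !scalerA; congr (_ *: _).
by rewrite mulrACA mulVf ?two_expn_neq0 // mulr1 mulrC.
Qed.

Lemma U_mul_Pi g : U g *m Pi_pn U = Pi_pn U.
Proof.
rewrite /Pi_pn -scalemxAr mulmx_sumr; congr (_ *: _).
by rewrite [RHS](reindex_inj (addrI g)); apply: eq_bigr => h _; rewrite U_hom.
Qed.

Hypothesis hatU_unitary : forall c, c \in dual_group m -> hatU c \is unitarymx.

Lemma hatU_triv : hatU (chi_triv m) = 1%:M.
Proof.
have triv_dual := chi_triv_dual m.
by apply: unitarymx_idem; rewrite ?hatU_unitary // -hatU_hom // chi_mulxx.
Qed.

Lemma Pi_hatU_Pi c : c \in dual_group m ->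
  Pi_pn U *m hatU c *m Pi_pn U = (c == chi_triv m)%:R *: Pi_pn U.
Proof.
move=> c_dual; rewrite {1}/Pi_pn -!scalemxAl !mulmx_suml.
under eq_bigr do rewrite dual // -scalemxAl -mulmxA U_mul_Pi.
rewrite -scaler_suml sum_chival_Zgrp //; case: eqP => [->|_]; last first.
  by rewrite scale0r scaler0 scale0r.
by rewrite hatU_triv mul1mx scalerA mulVf ?scale1r // card_Zgrp two_expn_neq0.
Qed.

(* [Pi_pn U] is generalized first, lest rewriting under [*m] unfold it. *)
Lemma Pi_hatP_Pi g : Pi_pn U *m hatP hatU g *m Pi_pn U = ((2 ^ m)%:R)^-1 *: Pi_pn U.
Proof.
have := Pi_hatU_Pi; move: (Pi_pn U) => P P_hatU_P.
rewrite /hatP -scalemxAr -scalemxAl mulmx_sumr mulmx_suml; congr (_ *: _).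
rewrite (bigD1 (chi_triv m)) ?chi_triv_dual //= big1 => [|c /andP[c_dual c_nontriv]].
  by rewrite -scalemxAr -scalemxAl P_hatU_P ?chi_triv_dual // eqxx chival_triv !scale1r addr0.
by rewrite -scalemxAr -scalemxAl P_hatU_P // (negbTE c_nontriv) scale0r scaler0.
Qed.

Lemma Pi_hatP_hatP_Pi g g' : Pi_pn U *m hatP hatU g *m hatP hatU g' *m Pi_pn U
  = (((2 ^ m)%:R)^-1 * (g == g')%:R) *: Pi_pn U.
Proof.
rewrite -(mulmxA (Pi_pn U)) hatP_mul.
have := Pi_hatP_Pi g'; move: (Pi_pn U) => P P_hatP_P.
by rewrite -scalemxAr -scalemxAl P_hatP_P scalerA mulrC.
Qed.

End Projectors.

Theorem mainTheorem15 (n k : nat) (hn : (1 <= n)%N) (hk : (k < n)%N)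
  (U : Zgrp (n - k) -> 'M[algC]_(2 ^ n))
  (hatU : {ffun Zgrp (n - k) -> bool} -> 'M[algC]_(2 ^ n))
  (* U is a faithful unitary representation of G into the Pauli group *)
  (U_hom : forall g h, U (g + h) = U g *m U h)
  (U_unitary : forall g, U g \is unitarymx)
  (U_pauli : forall g, in_pauli_group (U g))
  (U_faithful : injective U)
  (U_noMinusI : forall g, U g != - 1%:M)
  (* hatU is a unitary representation of the dual group *)
  (hatU_hom : forall chi1 chi2, chi1 \in dual_group (n - k) ->
      chi2 \in dual_group (n - k) ->
      hatU (chi_mul chi1 chi2) = hatU chi1 *m hatU chi2)
  (hatU_unitary : forall chi, chi \in dual_group (n - k) -> hatU chi \is unitarymx)
  (* duality relation U^g hatU^chi = chi(g) hatU^chi U^g *)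
  (dual : forall g chi, chi \in dual_group (n - k) ->
      U g *m hatU chi = chival chi g *: (hatU chi *m U g)) :
  forall g g' : Zgrp (n - k),
    Pi_pn U *m hatP hatU g *m hatP hatU g' *m Pi_pn U
    = (((2 ^ (n - k))%:R)^-1 * (g == g')%:R) *: Pi_pn U.
Proof.
by move=> g g'; apply: Pi_hatP_hatP_Pi.
Qed.
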